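(* Let $\mathbf p$ be a probability vector in $\mathbb R^k$ with all $p_j>0$, let $p_{\max}=\max_jp_j$, and define $$\alpha_{\min}(\mathbf p)=1-\frac{p_{\max}^{-1/3}}{\sum_{j=1}^kp_j^{2/3}}.$$ Then for every $\alpha\in[\alpha_{\min}(\mathbf p),1]$, $v^*_\alpha(\mathbf p)=\|\mathbf p\|_{2/3}=\big(\sum_jp_j^{2/3}\big)^{3/2}$. Consequently, for every such $\alpha$, the simple regret bound of Algorithm 1, namely $O\big(\sqrt{n/T}\,v^*_\alpha(\mathbf p)\big)$, equals $O\big(\sqrt{n/T}\,\|\mathbf p\|_{2/3}\big)$, the optimal rate of fully active policies, which is also the optimal rate over all policies.
   Context: $v^*_\alpha(\mathbf p)$ denotes the minimum value of $\sum_jp_j/\sqrt{q_j}$ over $\mathbf q\in\mathbb R^k$ with $q_j>0$, $\sum_jq_j=1$, subject to $q_j\ge(1-\alpha)p_j$ for all $j$. Setting: bandit with subpopulations with $n$ treatments, $k$ subpopulations, rewards in $[0,1]$, subpopulation distribution $\mathbf p$ known to the agent; a round is passive if $C_t\sim\mathbf p$ is revealed and active if the agent chooses $C_t$; worst-case simple regret $\sup_{\boldsymbol\nu}\sum_jp_j\mathbb E[\max_i\mu_{i,j}-\mu_{\hat a_j,j}]$ over $T$ rounds. Algorithm 1 (budget $\alpha$, using an anytime minimax-optimal simple-regret bandit subroutine $\mathrm{Alg}_{SR}$ per subpopulation): sample $C_t\sim\mathbf p$ for the first $\lfloor(1-\alpha)T\rfloor$ rounds; then with $c^*$ the unique solution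 of $\sum_j\max((1-\alpha)p_j,cp_j^{2/3})=1$, $q^*_j=\max((1-\alpha)p_j,c^*p_j^{2/3})$, $r_j=(q^*_j-(1-\alpha)p_j)/\alpha$, sample $C_t\sim\mathbf r$ in the remaining rounds; treatments and final recommendations come from the subroutine copy for $C_t$. Its worst-case simple regret is $O(\sqrt{n/T}\,v^*_\alpha(\mathbf p))$ for large $T$. Fully active policies may choose $C_t$ every round; $O$ hides universal constants. *)

From HB Require Import structures.
From mathcomp Require Import all_boot all_order all_algebra.
From mathcomp Require Import all_classical all_reals all_analysis.
Set Implicit Arguments. Unset Strict Implicit. Unset Printing Implicit Defensive.
Import Order.TTheory GRing.Theory Num.Theory.
Local Open Scope ring_scope.

Definition pos_prob_vector (R : realType) (k : nat) (p : 'I_k -> R) : Prop :=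
  (forall j, 0 < p j) /\ \sum_(j < k) p j = 1.

Definition feasible (R : realType) (k : nat) (alpha : R) (p q : 'I_k -> R) : Prop :=
  (forall j, 0 < q j) /\ \sum_(j < k) q j = 1 /\
  (forall j, (1 - alpha) * p j <= q j).

Definition vobj (R : realType) (k : nat) (p q : 'I_k -> R) : R :=
  \sum_(j < k) p j / Num.sqrt (q j).

Definition is_vstar (R : realType) (k : nat) (alpha : R) (p : 'I_k -> R) (v : R) : Prop :=
  (exists q, feasible alpha p q /\ vobj p q = v) /\
  (forall q, feasible alpha p q -> v <= vobj p q).

Definition pmax (R : realType) (k : nat) (p : 'I_k -> R) : R :=
  \big[Num.max/0]_(j < k) p j.

Definition alpha_min (R : realType) (k : nat) (p : 'I_k -> R) : R :=
  1 - (pmax p) `^ (- (1/3)) / (\sum_(j < k) (p j) `^ (2/3)).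

Definition norm23 (R : realType) (k : nat) (p : 'I_k -> R) : R :=
  (\sum_(j < k) (p j) `^ (2/3)) `^ (3/2).

(** Write [a_j = p_j^(1/3)] and [r = (sum_j a_j^2)^(1/2)], so that
    [||p||_{2/3} = r^3].  For every [s > 0] the tangent-line bound
    [a^3 / s >= 3/2 a^2 r - 1/2 r^3 s^2] holds; applied to [s = sqrt q_j] and
    summed using [sum_j q_j = 1] it shows that [r^3] is a lower bound for the
    objective even without the constraints [q_j >= (1 - alpha) p_j].  It is
    attained at [q_j = a_j^2 / r^2], proportional to [p_j^(2/3)], and this
    point satisfies the constraints iff [(1 - alpha) a_j r^2 <= 1] for all [j];
    the binding index is the largest [p_j], which gives exactly
    [alpha >= alpha_min p]. *)
From HB Require Import structures.
From mathcomp Require Import all_boot all_order all_algebra.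
From mathcomp Require Import all_classical all_reals all_analysis.
From mathcomp Require Import ring lra.
Set Implicit Arguments. Unset Strict Implicit. Unset Printing Implicit Defensive.
Import Order.TTheory GRing.Theory Num.Theory.
Local Open Scope ring_scope.

(* The cubic [a^3 - s (3/2 a^2 r - 1/2 r^3 s^2)] factors as
   [1/2 (r s - a)^2 (r s + 2 a)]. *)
Lemma tangent_le_cube_div (R : realFieldType) (a r s : R) :
  0 <= a -> 0 <= r -> 0 < s ->
  3 / 2 * (a ^+ 2 * r) - 1 / 2 * (r ^+ 3 * s ^+ 2) <= a ^+ 3 / s.
Proof.
move=> a_ge0 r_ge0 s_gt0; rewrite ler_pdivlMr //.
have rs_ge0 : 0 <= r * s by rewrite mulr_ge0 // ltW.
have cubic_ge0 : 0 <= (r * s - a) ^+ 2 * (r * s + 2 * a).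
  by rewrite mulr_ge0 ?sqr_ge0 //; lra.
have -> : (3 / 2 * (a ^+ 2 * r) - 1 / 2 * (r ^+ 3 * s ^+ 2)) * s =
          a ^+ 3 - 1 / 2 * ((r * s - a) ^+ 2 * (r * s + 2 * a)).
  by field; lra.
lra.
Qed.

Section CubeWeights.

Variables (R : realType) (k : nat) (a : 'I_k -> R) (r : R).
Hypotheses (a_gt0 : forall j, 0 < a j) (r_gt0 : 0 < r).
Hypothesis sum_sq : \sum_(j < k) a j ^+ 2 = r ^+ 2.

Let p j := a j ^+ 3.

Definition cube_weights (j : 'I_k) : R := a j ^+ 2 / r ^+ 2.

Lemma vobj_cube_ge q : (forall j, 0 < q j) -> \sum_(j < k) q j = 1 ->
  r ^+ 3 <= vobj p q.
Proof.
move=> q_gt0 q_sum1.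
apply: (@le_trans _ _ (\sum_(j < k)
    (3 / 2 * (a j ^+ 2 * r) - 1 / 2 * (r ^+ 3 * Num.sqrt (q j) ^+ 2)))).
  under eq_bigr => j _ do rewrite sqr_sqrtr ?ltW //.
  rewrite big_split /= sumrN -!mulr_sumr -mulr_suml sum_sq q_sum1 -exprSr.
  lra.
apply: ler_sum => j _; apply: tangent_le_cube_div; rewrite ?ltW //.
by rewrite sqrtr_gt0.
Qed.

Lemma vobj_cube_weights : vobj p cube_weights = r ^+ 3.
Proof.
rewrite /vobj (eq_bigr (fun j => a j ^+ 2 * r)) => [|j _].
  by rewrite -mulr_suml sum_sq -exprSr.
have aj_gt0 := a_gt0 j.
rewrite /cube_weights /p -expr_div_n sqrtr_sqr gtr0_norm ?divr_gt0 //.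
by field; rewrite !gt_eqF.
Qed.

Lemma feasible_cube_weights alpha :
  (forall j, (1 - alpha) * (a j * r ^+ 2) <= 1) ->
  feasible alpha p cube_weights.
Proof.
move=> alpha_le; split; first by move=> j; rewrite divr_gt0 ?exprn_gt0.
split; first by rewrite -mulr_suml sum_sq divff // expf_neq0 ?gt_eqF.
move=> j; rewrite /cube_weights /p ler_pdivlMr ?exprn_gt0 //.
have -> : (1 - alpha) * a j ^+ 3 * r ^+ 2 =
          a j ^+ 2 * ((1 - alpha) * (a j * r ^+ 2)) by ring.
exact: ler_piMr (exprn_ge0 _ (ltW (a_gt0 j))) (alpha_le j).
Qed.

Lemma is_vstar_cube alpha :
  (forall j, (1 - alpha) * (a j * r ^+ 2) <= 1) -> is_vstar alpha p (r ^+ 3).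
Proof.
move=> alpha_le; split.
  exists cube_weights; rewrite vobj_cube_weights; split => //.
  exact: feasible_cube_weights.
by move=> q [q_gt0 [q_sum1 _]]; apply: vobj_cube_ge.
Qed.

End CubeWeights.

Lemma le_pmax (R : realType) (k : nat) (p : 'I_k -> R) j : p j <= pmax p.
Proof. by rewrite /pmax (bigD1 j) //= le_max lexx. Qed.

Lemma powR_third (R : realType) (x : R) (n : nat) : 0 <= x ->
  x `^ (n%:R / 3) = (x `^ (1 / 3)) ^+ n.
Proof. by move=> x_ge0; rewrite -powR_mulrn ?powR_ge0 // -powRrM mul1r mulrC. Qed.

Lemma powR_three_halves (R : realType) (x : R) : 0 <= x ->
  x `^ (3 / 2) = Num.sqrt x ^+ 3.
Proof.
by move=> x_ge0; rewrite powRrM powRAC powR12_sqrt // powR_mulrn ?sqrtr_ge0.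
Qed.

Lemma sum_powR_gt0 (R : realType) (k : nat) (p : 'I_k -> R) (x : R) :
  pos_prob_vector p -> 0 < \sum_(j < k) p j `^ x.
Proof.
move=> [p_gt0 p_sum1].
have [j _] : exists j, true && (0 < p j).
  by apply: psumr_neq0P => [j _|]; rewrite ?ltW // p_sum1; apply/eqP/oner_neq0.
rewrite lt_def sumr_ge0 => [|i _]; last exact: powR_ge0.
rewrite psumr_neq0 => [|i _]; last exact: powR_ge0.
by rewrite andbT; apply/hasP; exists j; rewrite ?mem_index_enum ?powR_gt0.
Qed.

Lemma alpha_min_le_cube_root (R : realType) (k : nat) (p : 'I_k -> R) alpha j :
  pos_prob_vector p -> alpha_min p <= alpha -> alpha <= 1 ->
  (1 - alpha) * (p j `^ (1 / 3) * \sum_(i < k) p i `^ (2 / 3)) <= 1.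
Proof.
move=> p_pos; have S_gt0 := sum_powR_gt0 (2 / 3) p_pos.
set S := \sum_(i < k) _; have pj_gt0 := p_pos.1 j.
have pmax_gt0 : 0 < pmax p := lt_le_trans pj_gt0 (le_pmax p j).
have root_le : p j `^ (1 / 3) <= pmax p `^ (1 / 3).
  by rewrite ge0_ler_powR ?nnegrE ?le_pmax // ltW.
rewrite /alpha_min powRN -/S => alpha_ge alpha_le1.
have : (1 - alpha) * (pmax p `^ (1 / 3) * S) <= 1.
  by rewrite -ler_pdivlMr ?mulr_gt0 ?powR_gt0 // invfM mulrC; lra.
by apply: le_trans; rewrite ler_wpM2l ?subr_ge0 // ler_pM2r.
Qed.

Theorem lemma6 (R : realType) (k : nat) (p : 'I_k -> R) (alpha : R) :
  pos_prob_vector p ->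
  alpha_min p <= alpha -> alpha <= 1 ->
  is_vstar alpha p (norm23 p).
Proof.
move=> p_pos alpha_ge alpha_le1; have p_ge0 j := ltW (p_pos.1 j).
set a := fun j => p j `^ (1 / 3); set S := \sum_(j < k) p j `^ (2 / 3).
have S_gt0 : 0 < S := sum_powR_gt0 (2 / 3) p_pos.
have sum_sq : \sum_(j < k) a j ^+ 2 = Num.sqrt S ^+ 2.
  by rewrite sqr_sqrtr ?ltW //; apply: eq_bigr => j _; rewrite -powR_third.
have p_cube : p = fun j => a j ^+ 3.
  by apply/funext => j; rewrite -powR_third // divff ?powRr1.
rewrite /norm23 -/S powR_three_halves ?ltW // p_cube.
apply: (is_vstar_cube _ _ sum_sq) => [j||j].
- exact: powR_gt0 (p_pos.1 j).
- by rewrite sqrtr_gt0.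
- rewrite sqr_sqrtr; last exact: ltW.
  exact: alpha_min_le_cube_root j p_pos alpha_ge alpha_le1.
Qed.
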